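(* Let $\kappa_r\ge0$ be an integer with $\kappa_c>\kappa_r$, let $\tilde r:\mathcal Z_{N_{i_0}^{\kappa_r}}\to[0,1]$ and $\gamma\in(0,1)$. Define the cost of the original chain $C(z)=\sum_{t\ge0}\gamma^t\,\mathbb E[\tilde r(z_{N_{i_0}^{\kappa_r}}(t))\mid z(0)=z]$ for $z\in\mathcal Z$, and the cost of the sub-chain $\tilde C(x)=\sum_{t\ge0}\gamma^t\,\mathbb E[\tilde r(x_{N_{i_0}^{\kappa_r}}(t))\mid x(0)=x]$ for $x\in\mathcal Z_N$, where $(x(t))$ is the Markov chain on $\mathcal Z_N$ with kernel $\overline{\mathbb P}$. Then $$\sup_{z\in\mathcal Z}\left|\tilde C(z_N)-C(z)\right|\le\frac{\gamma^{\kappa_c-\kappa_r+1}}{1-\gamma}.$$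
   Context: Localized Markov chain: agents $\mathcal N=\{1,\dots,n\}$ on an undirected graph with graph distance $\mathrm{dist}$; $N_i^\kappa=\{j:\mathrm{dist}(i,j)\le\kappa\}$, $\mathcal N_i=N_i^1$. Agent $j$ has a finite local state space $\mathcal Z_j$; $\mathcal Z=\prod_j\mathcal Z_j$, and $z_I,\mathcal Z_I$ denote joint states/spaces of $I\subseteq\mathcal N$, with $-I=\mathcal N\setminus I$. The transition kernel is $\mathbb P(z'\mid z)=\prod_j\mathbb P_j(z_j'\mid z_{\mathcal N_j})$, and it is assumed aperiodic and irreducible, with (full-support) stationary distribution $\overline\pi$. Fix an agent $i_0$ and an integer $\kappa_c\ge1$, and let $N=N_{i_0}^{\kappa_c}$, $\overline\pi_N$ the marginal of $\overline\pi$ on $\mathcal Z_N$, and $\mathbb P_N(x'\mid z)=\sum_{z'_{-N}}\mathbb P(x',z'_{-N}\mid z)$ for $x'\in\mathcal Z_N$, $z\in\mathcal Z$. The sub-chain kernel on $\mathcal Z_N$ is $$\overline{\mathbb P}(x'\mid x)=\sum_{z_{-N}\in\mathcal Z_{-N}}\frac{\overline\pi(x,z_{-N})}{\overline\pi_N(x)}\,\mathbb P_N\big(x'\mid(x,z_{-N})\big),\qquad x,x'\in\mathcal Z_N.$$ *)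

From HB Require Import structures.
From mathcomp Require Import all_boot all_order all_algebra.
From mathcomp Require Import all_classical all_reals all_analysis.
Import Order.TTheory GRing.Theory Num.Theory.
Import numFieldNormedType.Exports.
Local Open Scope ring_scope.

(* Agents are 'I_n; the undirected graph is given by a relation adj on 'I_n
   (symmetric & irreflexive, assumed in the theorem).
   Nball adj i k = N_i^k = {j | dist(i,j) <= k}, computed by breadth-first layers. *)
Fixpoint Nball {n : nat} (adj : rel 'I_n) (i : 'I_n) (k : nat) : {set 'I_n} :=
  match k with
  | 0 => [set i]
  | k'.+1 => Nball adj i k' :|: [set j | [exists l in Nball adj i k', adj l j]]
  end.

Lemma ball_mono {n : nat} (adj : rel 'I_n) (i : 'I_n) {k1 k2 : nat} :
  (k1 <= k2)%N -> Nball adj i k1 \subset Nball adj i k2.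
Proof.
elim: k2 => [|k IH]; first by rewrite leqn0 => /eqP ->.
rewrite leq_eqVlt => /orP [/eqP -> // | H].
have HH := IH H.
rewrite /=; apply/fintype.subsetP => x /(fintype.subsetP HH) hx; by rewrite inE hx.
Qed.

Definition state {n : nat} (Z : 'I_n -> finType) := {dffun forall j : 'I_n, Z j}.

Definition lstate {n : nat} (Z : 'I_n -> finType) (I : {set 'I_n}) :=
  {dffun forall j : {j : 'I_n | j \in I}, Z (val j)}.

Definition restr {n : nat} {Z : 'I_n -> finType} (I : {set 'I_n})
  (z : state Z) : lstate Z I :=
  @finfun _ (fun j : {j : 'I_n | j \in I} => Z (val j)) (fun j => z (val j)).

Definition restrS {n : nat} {Z : 'I_n -> finType} {K N : {set 'I_n}}
  (hKN : K \subset N) (x : lstate Z N) : lstate Z K :=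
  @finfun _ (fun j : {j : 'I_n | j \in K} => Z (val j))
    (fun j => x (exist (fun j => j \in N) (val j) (fintype.subsetP hKN _ (valP j)))).

Definition globalP {R : realType} {n : nat} {adj : rel 'I_n} {Z : 'I_n -> finType}
  (Pj : forall j : 'I_n, Z j -> lstate Z (Nball adj j 1) -> R)
  (z z' : state Z) : R :=
  \prod_(j : 'I_n) Pj j (z' j) (restr (Nball adj j 1) z).

Fixpoint kpow {R : realType} {T : finType} (K : T -> T -> R) (t : nat) (x y : T) : R :=
  match t with
  | 0 => (x == y)%:R
  | t'.+1 => \sum_(w : T) kpow K t' x w * K w y
  end.

Definition marg {R : realType} {n : nat} {Z : 'I_n -> finType} (N : {set 'I_n})
  (pi : state Z -> R) (x : lstate Z N) : R :=
  \sum_(z : state Z | restr N z == x) pi z.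

Definition kernelN {R : realType} {n : nat} {Z : 'I_n -> finType} (N : {set 'I_n})
  (P : state Z -> state Z -> R) (z : state Z) (x' : lstate Z N) : R :=
  \sum_(z' : state Z | restr N z' == x') P z z'.

(* Sub-chain kernel Pbar(x'|x) on Z_N; the sum over z_{-N} is the sum over the
   global states z with z_N = x. *)
Definition subP {R : realType} {n : nat} {Z : 'I_n -> finType} (N : {set 'I_n})
  (P : state Z -> state Z -> R) (pi : state Z -> R) (x x' : lstate Z N) : R :=
  \sum_(z : state Z | restr N z == x) (pi z / marg N pi x) * kernelN N P z x'.

Definition dcost {R : realType} {T : finType} (K : T -> T -> R) (gamma : R)
  (f : T -> R) (x : T) : R :=
  limn (series (fun t => gamma ^+ t * \sum_(y : T) kpow K t x y * f y)).

From HB Require Import structures.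
From mathcomp Require Import all_boot all_order all_algebra.
From mathcomp Require Import all_classical all_reals all_analysis.
From mathcomp Require Import lra.
Import Order.TTheory GRing.Theory Num.Theory.
Import numFieldNormedType.Exports.
Local Open Scope ring_scope.

(* A step of the localized chain turns a function of the coordinates in
   N_{i0}^k into one of the coordinates in N_{i0}^(k+1): the factors P_j with
   j outside N_{i0}^k have total mass 1 and can be summed out, and the others
   only read z_{N_j}, which lies in N_{i0}^(k+1).  The sub-chain kernel on
   Z_N only averages the unobserved coordinates z_{-N} against pi, which does
   not affect functions of the coordinates in N.  Hence
   for t <= kc - kr the expected reward at time t is the same for both chains,
   and the two discounted series, whose terms lie in [0, gamma^t], differ by at
   most the geometric tail from kc - kr + 1. *)

Lemma restr_coord {n : nat} {Z : 'I_n -> finType} {S : {set 'I_n}} (z : state Z) {j : 'I_n}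
  (jS : j \in S) : restr S z (exist _ j jS) = z j.
Proof. by rewrite /restr ffunE. Qed.

Lemma eq_restr_coord {n : nat} {Z : 'I_n -> finType} (S : {set 'I_n}) (z w : state Z) :
  restr S z = restr S w -> forall j, j \in S -> z j = w j.
Proof. by move=> /ffunP eq_zw j jS; rewrite -(restr_coord z jS) eq_zw restr_coord. Qed.

Lemma restrS_restr {n : nat} {Z : 'I_n -> finType} {K N : {set 'I_n}} (KN : K \subset N)
  (z : state Z) : restrS KN (restr N z) = restr K z.
Proof. by apply/ffunP => -[j jK]; rewrite /restrS /restr !ffunE. Qed.

Section States.
Context {n : nat} {Z : 'I_n -> finType}.

Definition upd (y : state Z) {j0 : 'I_n} (a : Z j0) : state Z :=
  @finfun _ Z (fun j => @dfwith _ Z (fun k => y k) j0 a j).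

Lemma upd_in y j0 (a : Z j0) : upd y a j0 = a.
Proof. by rewrite /upd ffunE; apply: dfwith_in. Qed.

Lemma upd_out y j0 (a : Z j0) j : j0 != j -> upd y a j = y j.
Proof. by move=> ne; rewrite /upd ffunE; apply: dfwith_out. Qed.

Lemma upd_upd y j0 (a b : Z j0) : upd (upd y a) b = upd y b.
Proof.
by apply/ffunP => j; have [<-|ne] := eqVneq j0 j; rewrite ?upd_in // !upd_out.
Qed.

Lemma upd_id y j0 : upd y (y j0) = y.
Proof.
by apply/ffunP => j; have [<-|ne] := eqVneq j0 j; rewrite ?upd_in // upd_out.
Qed.

Definition depends_on {T : Type} (S : {set 'I_n}) (f : state Z -> T) :=
  forall y y' : state Z, (forall j, j \in S -> y j = y' j) -> f y = f y'.

Lemma depends_on_sub {T : Type} (S S' : {set 'I_n}) (f : state Z -> T) :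
  S \subset S' -> depends_on S f -> depends_on S' f.
Proof. by move=> /fintype.subsetP sSS' fS y y' agree; apply: fS => j /sSS'/agree. Qed.

Lemma depends_on_upd {T : Type} (S : {set 'I_n}) (f : state Z -> T) j0 :
  depends_on S f -> j0 \notin S -> forall y (a : Z j0), f (upd y a) = f y.
Proof.
move=> fS j0S y a; apply: fS => j jS; rewrite upd_out //.
by apply: contraNneq j0S => ->.
Qed.

Lemma depends_on_restr {T : Type} (S : {set 'I_n}) (g : lstate Z S -> T) :
  depends_on S (fun z : state Z => g (restr S z)).
Proof.
by move=> y y' agree; congr g; apply/ffunP => -[j jS]; rewrite !restr_coord agree.
Qed.

End States.

Section ProductKernels.
Context {R : comPzRingType} {n : nat} {Z : 'I_n -> finType}.

Lemma sum_factor_coord {j0 : 'I_n} (c : Z j0) (h : Z j0 -> R) (H : state Z -> R) :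
  (forall y (a : Z j0), H (upd y a) = H y) ->
  \sum_(y : state Z) h (y j0) * H y = (\sum_a h a) * \sum_(y : state Z | y j0 == c) H y.
Proof.
move=> H_inv.
rewrite (partition_big (fun y : state Z => y j0) xpredT) //= big_distrl /=.
apply: eq_bigr => a _.
rewrite (eq_bigr (fun y => h a * H y)); last by move=> y /eqP ->.
rewrite -big_distrr /=; congr (_ * _).
rewrite (reindex_onto (fun y : state Z => upd y a) (fun y => upd y c)) /=; last first.
  by move=> y /eqP <-; rewrite upd_upd upd_id.
apply: eq_big => y; last by rewrite H_inv.
rewrite upd_in eqxx upd_upd /=.
by apply/eqP/eqP => [<-|<-]; rewrite ?upd_in ?upd_id.
Qed.

Lemma sum_prod_swap_coord (j0 : 'I_n) (q q' : forall j, Z j -> R) (f : state Z -> R) :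
  (forall j, j != j0 -> q j =1 q' j) -> \sum_a q j0 a = \sum_a q' j0 a ->
  (forall y (a : Z j0), f (upd y a) = f y) ->
  \sum_(y : state Z) (\prod_j q j (y j)) * f y
  = \sum_(y : state Z) (\prod_j q' j (y j)) * f y.
Proof.
move=> eq_off eq_mass f_inv; apply/eqP; rewrite -subr_eq0 -sumrB.
pose H (y : state Z) := (\prod_(j | j != j0) q j (y j)) * f y.
rewrite (eq_bigr (fun y : state Z => (q j0 (y j0) - q' j0 (y j0)) * H y)); last first.
  move=> y _; rewrite (bigD1 j0) //= [X in _ - X * _](bigD1 j0) //= /H.
  rewrite [\prod_(j | j != j0) q' j _](eq_bigr (fun j => q j (y j))).
    by rewrite mulrBl !mulrA.
  by move=> j /eq_off ->.
case: (pickP (@predT (state Z))) => [y0 _|empty]; last by rewrite big_pred0.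
rewrite (sum_factor_coord (y0 j0) (fun a => q j0 a - q' j0 a)).
  by rewrite sumrB eq_mass subrr mul0r.
move=> y a; rewrite /H f_inv; congr (_ * _).
by apply: eq_bigr => j ne; rewrite upd_out // eq_sym.
Qed.

Lemma sum_prod_local (S : {set 'I_n}) (q q' : forall j, Z j -> R) (f : state Z -> R) :
  (forall j, \sum_a q j a = \sum_a q' j a) -> (forall j, j \in S -> q j =1 q' j) ->
  depends_on S f ->
  \sum_(y : state Z) (\prod_j q j (y j)) * f y
  = \sum_(y : state Z) (\prod_j q' j (y j)) * f y.
Proof.
move=> eq_mass eq_S fS.
pose qm (m : nat) (j : 'I_n) := if (j < m)%N then q' j else q j.
pose E m := \sum_(y : state Z) (\prod_j qm m j (y j)) * f y.
have E_step m : E m = E m.+1.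
  case: (ltnP m n) => [mn|nm]; last first.
    apply: eq_bigr => y _; congr (_ * _); apply: eq_bigr => j _.
    have jm : (j < m)%N := leq_trans (ltn_ord j) nm.
    by rewrite /qm jm ltnS ltnW.
  pose j0 : 'I_n := Ordinal mn.
  have qm_off j : j != j0 -> qm m j = qm m.+1 j.
    by move=> ne; rewrite /qm ltnS [(j <= m)%N]leq_eqVlt (negbTE (ne : (j : nat) != m)).
  have [j0S|j0S] := boolP (j0 \in S).
    apply: eq_bigr => y _; congr (_ * _); apply: eq_bigr => j _.
    have [->|ne] := eqVneq j j0; last by rewrite qm_off.
    by rewrite /qm /= ltnn ltnSn eq_S.
  apply: (sum_prod_swap_coord j0); last exact: depends_on_upd fS j0S.
    by move=> j /qm_off ->.
  by rewrite /qm /= ltnn ltnSn.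
have E_all m : E 0 = E m by elim: m => // m ->; apply: E_step.
rewrite [LHS](E_all 0) [RHS](_ : _ = E n); first exact: E_all.
by apply: eq_bigr => y _; congr (_ * _); apply: eq_bigr => j _; rewrite /qm ltn_ord.
Qed.

Lemma sum_prod_kernel1 (z0 : state Z) (q : forall j, Z j -> R) :
  (forall j, \sum_a q j a = 1) -> \sum_(y : state Z) \prod_j q j (y j) = 1.
Proof.
move=> q1; pose dirac j (a : Z j) : R := (a == z0 j)%:R.
have dirac1 j : \sum_a dirac j a = 1.
  by rewrite (bigD1 (z0 j)) //= /dirac eqxx big1 ?addr0 // => a /negbTE ->.
transitivity (\sum_(y : state Z) (\prod_j q j (y j)) * 1).
  by apply: eq_bigr => y _; rewrite mulr1.
rewrite (sum_prod_local finset.set0 q dirac) => [|j|j|//]; last 2 first.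
- by rewrite q1 dirac1.
- by rewrite inE.
rewrite (bigD1 z0) //= big1 => [|j _]; last by rewrite /dirac eqxx.
rewrite big1 ?mulr1 ?addr0 // => y ne.
have [j ne_j] : exists j, y j != z0 j.
  apply/existsP; apply: contraR ne; rewrite negb_exists => /forallP eq_yz.
  by apply/eqP/ffunP => j; apply/eqP; move: (eq_yz j); rewrite negbK.
by rewrite (bigD1 j) //= /dirac (negbTE ne_j) mul0r mul0r.
Qed.

End ProductKernels.

Definition kapply {R : pzSemiRingType} {T : finType} (K : T -> T -> R) (g : T -> R) (x : T)
  : R :=
  \sum_y K x y * g y.

Lemma eq_kapply {R : pzSemiRingType} {T : finType} {K : T -> T -> R} {g h : T -> R} :
  g =1 h -> kapply K g =1 kapply K h.
Proof. by move=> eq_gh x; apply: eq_bigr => y _; rewrite eq_gh. Qed.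

Lemma kapply_kpow0 {R : realType} {T : finType} (K : T -> T -> R) g x :
  kapply (kpow K 0) g x = g x.
Proof.
rewrite /kapply (bigD1 x) //= eqxx mul1r big1 ?addr0 // => y.
by rewrite eq_sym => /negbTE ->; rewrite mul0r.
Qed.

Lemma kapply_kpowS {R : realType} {T : finType} (K : T -> T -> R) t g x :
  kapply (kpow K t.+1) g x = kapply (kpow K t) (kapply K g) x.
Proof.
rewrite /kapply /=; under eq_bigr do rewrite big_distrl /=.
rewrite exchange_big /=; apply: eq_bigr => w _; rewrite big_distrr /=.
by apply: eq_bigr => y _; rewrite mulrA.
Qed.

Lemma kapply_unit_interval {R : numDomainType} {T : finType} (K : T -> T -> R) g x :
  (forall y, 0 <= K x y) -> \sum_y K x y <= 1 -> (forall y, 0 <= g y <= 1) ->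
  0 <= kapply K g x <= 1.
Proof.
move=> K_ge0 K_le1 g01; apply/andP; split.
  by apply: sumr_ge0 => y _; rewrite mulr_ge0 //; case/andP: (g01 y).
apply: le_trans K_le1; apply: ler_sum => y _.
by rewrite ler_piMr //; case/andP: (g01 y).
Qed.

Lemma kapply_kpow_unit_interval {R : realType} {T : finType} (K : T -> T -> R) g t x :
  (forall x y, 0 <= K x y) -> (forall x, \sum_y K x y <= 1) ->
  (forall y, 0 <= g y <= 1) -> 0 <= kapply (kpow K t) g x <= 1.
Proof.
move=> K_ge0 K_le1; elim: t g x => [|t IH] g x g01; first by rewrite kapply_kpow0.
by rewrite kapply_kpowS; apply: IH => y; apply: kapply_unit_interval.
Qed.

Lemma Nball1_sub_NballS {n : nat} {adj : rel 'I_n} {i : 'I_n} {k : nat} {j : 'I_n} :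
  j \in Nball adj i k -> Nball adj j 1 \subset Nball adj i k.+1.
Proof.
move=> jik; apply/fintype.subsetP => l; rewrite /= !inE => /orP [/eqP ->|].
  by rewrite jik.
move=> /existsP [l0 /andP []]; rewrite inE => /eqP -> adj_jl.
by apply/orP; right; apply/existsP; exists j; rewrite jik.
Qed.

Section GlobalKernel.
Context {R : realType} {n : nat} {adj : rel 'I_n} {Z : 'I_n -> finType}.
Variable Pj : forall j : 'I_n, Z j -> lstate Z (Nball adj j 1) -> R.
Hypothesis Pj_ge0 : forall j a s, 0 <= Pj j a s.
Hypothesis Pj_sum1 : forall j s, \sum_(a : Z j) Pj j a s = 1.

Lemma globalP_ge0 z z' : 0 <= globalP Pj z z'.
Proof. by rewrite /globalP; apply: prodr_ge0 => j _; apply: Pj_ge0. Qed.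

Lemma globalP_sum1 z : \sum_z' globalP Pj z z' = 1.
Proof.
rewrite /globalP.
exact: (sum_prod_kernel1 z (fun j a => Pj j a (restr _ z)) (fun j => Pj_sum1 j _)).
Qed.

Lemma globalP_local {i : 'I_n} {k : nat} {g : state Z -> R} :
  depends_on (Nball adj i k) g -> depends_on (Nball adj i k.+1) (kapply (globalP Pj) g).
Proof.
move=> g_loc w w' agree; rewrite /kapply /globalP.
apply: (sum_prod_local _ (fun j a => Pj j a (restr _ w)) (fun j a => Pj j a (restr _ w'))
  _ _ _ g_loc) => [j|j jik a].
  by rewrite !Pj_sum1.
congr (Pj j a _); apply/ffunP => -[l hl]; rewrite /restr !ffunE /=.
by apply: agree; apply: (fintype.subsetP (Nball1_sub_NballS jik)).
Qed.

End GlobalKernel.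

Section SubChain.
Context {R : realType} {n : nat} {Z : 'I_n -> finType} (N : {set 'I_n}).
Variables (P : state Z -> state Z -> R) (pi : state Z -> R).
Hypothesis P_ge0 : forall z z', 0 <= P z z'.
Hypothesis P_sum1 : forall z, \sum_z' P z z' = 1.
Hypothesis pi_gt0 : forall z, 0 < pi z.

Lemma marg_ge0 x : 0 <= marg N pi x.
Proof. by apply: sumr_ge0 => z _; apply: ltW. Qed.

Lemma marg_restr_gt0 z : 0 < marg N pi (restr N z).
Proof.
rewrite /marg (bigD1 z) //=; apply: lt_le_trans (pi_gt0 z) _.
by rewrite lerDl; apply: sumr_ge0 => y _; apply: ltW.
Qed.

Lemma subP_ge0 x x' : 0 <= subP N P pi x x'.
Proof.
apply: sumr_ge0 => z _; apply: mulr_ge0; first by rewrite divr_ge0 ?marg_ge0 ?ltW.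
by apply: sumr_ge0 => y _; apply: P_ge0.
Qed.

Lemma kapply_kernelN (G : lstate Z N -> R) z :
  \sum_x' kernelN N P z x' * G x' = kapply P (fun y => G (restr N y)) z.
Proof.
rewrite /kapply (partition_big (fun y => restr N y) xpredT) //=.
apply: eq_bigr => x' _; rewrite /kernelN big_distrl /=.
by apply: eq_big => [y //|y /eqP ->].
Qed.

Lemma kapply_subP (G : lstate Z N -> R) x :
  kapply (subP N P pi) G x
  = \sum_(z | restr N z == x) pi z / marg N pi x * kapply P (fun y => G (restr N y)) z.
Proof.
rewrite {1}/kapply /subP; under eq_bigr do rewrite big_distrl /=.
rewrite exchange_big /=; apply: eq_bigr => z _.
by rewrite -kapply_kernelN big_distrr /=; apply: eq_bigr => x' _; rewrite mulrA.
Qed.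

Lemma subP_sum_le1 x : \sum_x' subP N P pi x x' <= 1.
Proof.
have := kapply_subP (fun _ => 1) x; rewrite /kapply.
under eq_bigr do rewrite mulr1; move=> ->.
under eq_bigr do rewrite (eq_bigr _ (fun y _ => mulr1 (P _ y))) P_sum1 mulr1.
rewrite -big_distrl /= -/(marg N pi x).
by have [->|nz] := eqVneq (marg N pi x) 0; rewrite ?mul0r ?divff.
Qed.

Lemma kapply_subP_restr (G : lstate Z N -> R) z :
  depends_on N (kapply P (fun y => G (restr N y))) ->
  kapply (subP N P pi) G (restr N z) = kapply P (fun y => G (restr N y)) z.
Proof.
move=> G_loc; rewrite kapply_subP.
under eq_bigr => w /eqP eq_wz.
  rewrite (G_loc w z); last exact: eq_restr_coord.
over.
rewrite -!big_distrl /= -/(marg N pi (restr N z)).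
by rewrite divff ?mul1r // gt_eqF // marg_restr_gt0.
Qed.

End SubChain.

(* After s steps the expectation depends on N^(k+s) only; k + t <= kc keeps
   every such ball inside N, where kapply_subP_restr applies. *)
Lemma kapply_kpow_subP {R : realType} {n : nat} {adj : rel 'I_n} {Z : 'I_n -> finType}
  (Pj : forall j : 'I_n, Z j -> lstate Z (Nball adj j 1) -> R) (pi : state Z -> R)
  (i0 : 'I_n) (kc : nat) :
  (forall j s, \sum_(a : Z j) Pj j a s = 1) -> (forall z, 0 < pi z) ->
  forall t k (G : lstate Z (Nball adj i0 kc) -> R) z, (k + t <= kc)%N ->
  depends_on (Nball adj i0 k) (fun y => G (restr (Nball adj i0 kc) y)) ->
  kapply (kpow (globalP Pj) t) (fun y => G (restr (Nball adj i0 kc) y)) z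
  = kapply (kpow (subP (Nball adj i0 kc) (globalP Pj) pi) t) G (restr (Nball adj i0 kc) z).
Proof.
move=> Pj_sum1 pi_gt0; set N := Nball adj i0 kc.
elim=> [|t IH] k G z hk G_loc; first by rewrite !kapply_kpow0.
have sub1 : Nball adj i0 k.+1 \subset N.
  by apply: ball_mono; apply: leq_trans hk; rewrite addnS ltnS leq_addr.
have G1_loc := globalP_local Pj Pj_sum1 G_loc.
have step y : kapply (globalP Pj) (fun y => G (restr N y)) y
            = kapply (subP N (globalP Pj) pi) G (restr N y).
  by rewrite kapply_subP_restr //; apply: depends_on_sub sub1 G1_loc.
rewrite !kapply_kpowS (eq_kapply step); apply: (IH k.+1).
  by rewrite addSn -addnS.
by move=> y y' agree; rewrite -!step; apply: G1_loc.
Qed.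

Section DiscountedSeries.
Context {R : realType} (g : R).
Hypothesis g01 : 0 <= g < 1.

Lemma sum_geometric_tail_le T M : \sum_(T <= t < M) g ^+ t <= g ^+ T / (1 - g).
Proof.
have [g0 g1] := andP g01; have g1_gt0 : 0 < 1 - g by rewrite subr_gt0.
have [MT|TM] := leqP M T.
  by rewrite big_geq //; apply: divr_ge0; [exact: exprn_ge0 | exact: ltW].
rewrite -(subnKC (ltnW TM)) geometric_partial_tail geometric_seriesE ?lt_eqF //=.
rewrite ler_pM2r ?invr_gt0 // ler_piMr ?exprn_ge0 //.
by rewrite gerBl exprn_ge0.
Qed.

Lemma is_cvg_discounted_series {u : R ^nat} :
  (forall t, 0 <= u t <= 1) -> cvgn (series (fun t => g ^+ t * u t)).
Proof.
move=> u01; have [g0 g1] := andP g01.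
apply: (@series_le_cvg R _ (geometric 1 g)) => [t|t|t|].
- by rewrite mulr_ge0 ?exprn_ge0 //; case/andP: (u01 t).
- by rewrite /geometric /= mul1r exprn_ge0.
- by rewrite /geometric /= mul1r ler_piMr ?exprn_ge0 //; case/andP: (u01 t).
- by apply: is_cvg_geometric_series; rewrite ger0_norm.
Qed.

Lemma discounted_series_dist (u v : R ^nat) T :
  (forall t, 0 <= u t <= 1) -> (forall t, 0 <= v t <= 1) ->
  (forall t, (t < T)%N -> u t = v t) ->
  `| limn (series (fun t => g ^+ t * v t)) - limn (series (fun t => g ^+ t * u t)) |
  <= g ^+ T / (1 - g).
Proof.
move=> u01 v01 uv; have [g0 g1] := andP g01.
have cu := is_cvg_discounted_series u01; have cv := is_cvg_discounted_series v01.
rewrite -lim_seriesB // -lim_norm; last exact: is_cvg_seriesB.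
apply: limr_le; first by apply: is_cvg_norm; apply: is_cvg_seriesB.
apply: nearW => M; rewrite /series /=.
have tail : \sum_(0 <= t < M) ((fun t => g ^+ t * v t) - (fun t => g ^+ t * u t)) t
            = \sum_(T <= t < M) g ^+ t * (v t - u t).
  have [MT|TM] := leqP M T.
    rewrite [RHS]big_geq // big_nat big1 // => t /andP [_ tM].
    by rewrite !fctE (uv t) ?subrr; last exact: leq_trans tM MT.
  rewrite (big_cat_nat (n := T)) ?(ltnW TM) //= big_nat big1 ?add0r => [|t /andP [_ tT]].
    by apply: eq_bigr => t _; rewrite !fctE mulrBr.
  by rewrite !fctE (uv t) ?subrr.
rewrite tail; apply: le_trans (ler_norm_sum _ _ _) (le_trans _ (sum_geometric_tail_le T M)).
apply: ler_sum => t _; rewrite normrM ger0_norm ?exprn_ge0 // ler_piMr ?exprn_ge0 //.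
have [/andP [u0 u1] /andP [v0 v1]] := (u01 t, v01 t).
by rewrite ler_norml; apply/andP; split; lra.
Qed.

End DiscountedSeries.

Theorem mainTheorem20 (R : realType) (n : nat) (adj : rel 'I_n)
  (Z : 'I_n -> finType)
  (Pj : forall j : 'I_n, Z j -> lstate Z (Nball adj j 1) -> R)
  (pi : state Z -> R) (i0 : 'I_n) (kc kr : nat)
  (rt : lstate Z (Nball adj i0 kr) -> R) (gamma : R) :
  (* undirected simple graph *)
  (forall i j, adj i j = adj j i) -> (forall i, ~~ adj i i) ->
  (* each local kernel is a probability distribution on Z_j *)
  (forall j a s, 0 <= Pj j a s) -> (forall j s, \sum_(a : Z j) Pj j a s = 1) ->
  (* irreducible *)
  (forall z z' : state Z, exists t, 0 < kpow (globalP Pj) t z z') ->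
  (* aperiodic: the period (gcd of return times) of every state is 1 *)
  (forall (z : state Z) (d : nat),
      (forall t, 0 < kpow (globalP Pj) t z z -> (d %| t)%N) -> d = 1%N) ->
  (* pi is the (full-support) stationary distribution *)
  (forall z, 0 < pi z) -> \sum_(z : state Z) pi z = 1 ->
  (forall z', \sum_(z : state Z) pi z * globalP Pj z z' = pi z') ->
  (1 <= kc)%N -> forall hk : (kr < kc)%N,
  (forall x, 0 <= rt x <= 1) ->
  0 < gamma < 1 ->
  let N := Nball adj i0 kc in
  let K := Nball adj i0 kr in
  let C := dcost (globalP Pj) gamma (fun z => rt (restr K z)) in
  let Ct := dcost (subP N (globalP Pj) pi) gamma
              (fun x => rt (restrS (ball_mono adj i0 (ltnW hk)) x)) in
  forall z : state Z, `| Ct (restr N z) - C z | <= gamma ^+ (kc - kr + 1) / (1 - gamma).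
Proof.
move=> _ _ Pj_ge0 Pj_sum1 _ _ pi_gt0 _ _ _ hk rt01 /andP [g0 g1] N K C Ct z.
set KN := ball_mono adj i0 (ltnW hk).
have P_ge0 := globalP_ge0 Pj Pj_ge0.
have P_le1 x : \sum_y globalP Pj x y <= 1 by rewrite globalP_sum1.
have g01 : 0 <= gamma < 1 by rewrite ltW.
apply: (@discounted_series_dist R gamma g01
  (fun t => kapply (kpow (globalP Pj) t) (fun y => rt (restr K y)) z)
  (fun t => kapply (kpow (subP N (globalP Pj) pi) t) (fun x => rt (restrS KN x)) (restr N z)))
  => [t|t|t].
- exact: kapply_kpow_unit_interval.
- apply: kapply_kpow_unit_interval => // [x y|x].
    exact: (subP_ge0 _ _ _ P_ge0 pi_gt0).
  exact: (subP_sum_le1 _ _ _ (globalP_sum1 Pj Pj_sum1)).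
rewrite addn1 ltnS => t_le.
rewrite -(kapply_kpow_subP Pj pi i0 kc Pj_sum1 pi_gt0 t kr).
- by apply: eq_kapply => y; rewrite restrS_restr.
- by rewrite -(subnKC (ltnW hk)) leq_add2l.
by move=> y y' agree; rewrite !restrS_restr; apply: depends_on_restr.
Qed.
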